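(* Let $d\geq 2$ and let $\mathsf{M}_1,\mathsf{M}_2$ be two sharp $d$-outcome measurements on $\mathbb{C}^d$, i.e. $\mathsf{M}_1(x)=|\varphi_x\rangle\langle\varphi_x|$ and $\mathsf{M}_2(y)=|\psi_y\rangle\langle\psi_y|$ for orthonormal bases $\{\varphi_x\}_{x=1}^d$, $\{\psi_y\}_{y=1}^d$. Then $$\bar{P}_{\rm qrac}(\mathsf{M}_1,\mathsf{M}_2)=\frac{1}{2d^2}\sum_{x,y=1}^d \big\|\mathsf{M}_1(x)+\mathsf{M}_2(y)\big\| \geq \frac12\left(1+\frac1d\right),$$ with equality if and only if $\mathsf{M}_1$ and $\mathsf{M}_2$ are compatible (equivalently, there is a permutation $\sigma$ of $\{1,\dots,d\}$ with $\mathsf{M}_2(y)=\mathsf{M}_1(\sigma(y))$ for all $y$).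
   Context: $\|\cdot\|$ is the operator norm. Two POVMs $\mathsf{M}_1,\mathsf{M}_2$ are compatible if there is a POVM $\mathsf{G}$ on the product outcome set with $\sum_y\mathsf{G}(x,y)=\mathsf{M}_1(x)$ and $\sum_x\mathsf{G}(x,y)=\mathsf{M}_2(y)$. $\bar P_{\rm qrac}$ is the optimal (over encodings) average success probability in the $(2,d)$ quantum random access code, given by the displayed formula, and $\frac12(1+\frac1d)$ is the optimal classical $(2,d)$ random access code success probability. *)

From HB Require Import structures.
From mathcomp Require Import all_boot all_order all_algebra.
From mathcomp Require Import classical_sets reals.
From mathcomp Require Import complex.
Set Implicit Arguments. Unset Strict Implicit. Unset Printing Implicit Defensive.
Import Order.TTheory GRing.Theory Num.Theory.
Local Open Scope ring_scope.
Local Open Scope complex_scope.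
Local Open Scope sesquilinear_scope.

Section QRAC.
Variables (R : realType) (d : nat).
Local Notation C := R[i].

Definition vnorm (v : 'cV[C]_d) : R :=
  Num.sqrt (\sum_(i < d) (complex.Re (v i 0) ^+ 2 + complex.Im (v i 0) ^+ 2)).

Definition opnorm (A : 'M[C]_d) : R :=
  sup [set vnorm (A *m v) | v in [set v : 'cV[C]_d | vnorm v = 1]]%classic.

Definition psdmx (A : 'M[C]_d) : Prop :=
  forall v : 'cV[C]_d, 0 <= ((v ^t* *m A *m v) 0 0).

Definition orthonormal_basis (phi : 'I_d -> 'cV[C]_d) : Prop :=
  forall x y, (phi x) ^t* *m phi y = (x == y)%:R%:M.

Definition sharp_meas (phi : 'I_d -> 'cV[C]_d) (x : 'I_d) : 'M[C]_d :=
  phi x *m (phi x) ^t*.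

Definition compatible (M1 M2 : 'I_d -> 'M[C]_d) : Prop :=
  exists G : 'I_d -> 'I_d -> 'M[C]_d,
    (forall x y, psdmx (G x y)) /\
    \sum_(x < d) \sum_(y < d) G x y = 1%:M /\
    (forall x, \sum_(y < d) G x y = M1 x) /\
    (forall y, \sum_(x < d) G x y = M2 y).

Definition Pqrac (M1 M2 : 'I_d -> 'M[C]_d) : R :=
  (2 * d ^ 2)%:R^-1 * \sum_(x < d) \sum_(y < d) opnorm (M1 x + M2 y).

End QRAC.

(* For unit vectors f, g the operator |f><f| + |g><g| acts on span{f, g} through
   the Gram matrix [[1, c], [c^*, 1]], c = <f, g>, so its norm is 1 + |c|.  Hence
   Pqrac = (d^2 + sum_{x,y} t_xy) / (2 d^2) with t_xy = |<phi_x, psi_y>|.  The matrix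
   (t_xy^2) is doubly stochastic, so sum t_xy >= sum t_xy^2 = d, with equality iff
   every t_xy is 0 or 1, i.e. iff psi is a permutation of phi up to phases.  Such a
   permutation sigma yields the joint measurement G(x, y) = [x = sigma y] M1(x);
   conversely every G(x, y) of a joint measurement is annihilated by all phi_x'
   (x' <> x) and psi_y' (y' <> y), which forces t_xy^2 = t_xy^4. *)

From HB Require Import structures.
From mathcomp Require Import all_boot all_order all_algebra all_fingroup.
From mathcomp Require Import classical_sets reals complex.
From mathcomp Require Import ring lra.
Set Implicit Arguments. Unset Strict Implicit. Unset Printing Implicit Defensive.
Import Order.TTheory GRing.Theory Num.Theory Normc.
Local Open Scope ring_scope.
Local Open Scope complex_scope.
(* [^t*] conjugates entries with [Num.conj], not with the [conjc] of complex_scope. *)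
Local Notation "x ^*" := (Num.conj x) : complex_scope.
Local Notation Re := (@complex.Re _).
Local Notation Im := (@complex.Im _).

Lemma sup_attained (R : realType) (S : set R) m :
  S m -> (forall y, S y -> y <= m) -> sup S = m.
Proof.
move=> Sm ub; apply/eqP; rewrite eq_le ge_sup /=; [|by exists m|by move=> y /ub].
by apply: sup_upper_bound => //; split; [exists m | exists m => y /ub].
Qed.

Lemma sqr_le_self_leif (R : realDomainType) (s : R) :
  0 <= s <= 1 -> s ^+ 2 <= s ?= iff (s == 0) || (s == 1).
Proof.
case/andP=> s0 s1; split; first nra.
apply/idP/idP => [/eqP e|/orP[/eqP->|/eqP->]]; rewrite ?expr0n ?expr1n //.
by rewrite -[s == 1]subr_eq0 -mulf_eq0 mulrBr mulr1 -expr2 e subrr.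
Qed.

Lemma sum_sqr_one_eq0 (R : realDomainType) (I : finType) (F : I -> R) i j :
  \sum_k F k ^+ 2 = 1 -> F i = 1 -> j != i -> F j = 0.
Proof.
rewrite (bigD1 i) //= => + Fi1; rewrite Fi1 expr1n -[RHS]addr0 => /addrI/eqP.
rewrite psumr_eq0 => [/allP/(_ j)|k _]; last exact: sqr_ge0.
by rewrite mem_index_enum sqrf_eq0 => /(_ isT)/implyP h /h/eqP.
Qed.

Section ComplexModulus.
Variable R : rcfType.
Implicit Types (x y : R[i]) (k : R).

Lemma complex_ext x y : Re x = Re y -> Im x = Im y -> x = y.
Proof. by case: x; case: y => /= ? ? ? ? -> ->. Qed.

Lemma normc_ge0 x : 0 <= normc x.
Proof. by case: x => a b; apply: sqrtr_ge0. Qed.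

Lemma sqr_normc x : normc x ^+ 2 = Re x ^+ 2 + Im x ^+ 2.
Proof. by case: x => a b /=; rewrite sqr_sqrtr // addr_ge0 ?sqr_ge0. Qed.

Lemma mulJc_normc x : x^* * x = (normc x ^+ 2)%:C.
Proof. by rewrite sqr_normc; case: x => a b; apply: complex_ext => /=; ring. Qed.

Lemma normcJ x : normc x^* = normc x.
Proof. by case: x => a b /=; rewrite sqrrN. Qed.

Lemma ReJ x : Re x^* = Re x.
Proof. by case: x. Qed.

Lemma Re_realM k x : Re (k%:C * x) = k * Re x.
Proof. by case: x => a b /=; rewrite mul0r subr0. Qed.

Lemma Re_le_normc x : Re x <= normc x.
Proof.
rewrite -[Re x]/(Re (Re x)%:C); apply: (le_trans (ler_norm _)).
rewrite -(ler_pXn2r (_ : 0 < 2)%N) ?nnegrE ?normc_ge0 //= sqr_normc real_normK ?num_real //.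
by rewrite lerDl sqr_ge0.
Qed.

Lemma conj_real k : k%:C^* = k%:C.
Proof. by apply: complex_ext => /=; rewrite ?oppr0. Qed.

Lemma affine_ge0_slope0 (z r : R[i]) : (forall s : R, 0 <= s%:C * z + r) -> z = 0.
Proof.
case: z r => a b [c e] h.
have hs s : s * b + e = 0 /\ 0 <= s * a + c.
  by have := h s; rewrite lecE /= => /andP[/eqP ? ?]; split; lra.
have e0 : e = 0 by have [] := hs 0; rewrite mul0r add0r.
have b0 : b = 0 by have [] := hs 1; rewrite mul1r e0 addr0.
have [a0|a0] := eqVneq a 0; first by rewrite a0 b0.
by have [_] := hs (- (c + 1) / a); rewrite divfK // => ?; exfalso; lra.
Qed.

End ComplexModulus.
Local Open Scope sesquilinear_scope.

Section InnerProduct.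
Variables (R : realType) (d : nat).
Local Notation vec := 'cV[R[i]]_d.
Implicit Types (u v w f : vec) (k : R[i]).

Definition dot u v : R[i] := \sum_i (u i 0)^* * v i 0.

Lemma dotE u v : (u ^t* *m v) 0 0 = dot u v.
Proof. by rewrite !mxE; apply: eq_bigr => i _; rewrite !mxE. Qed.

Lemma dotDl u v w : dot (u + v) w = dot u w + dot v w.
Proof. by rewrite -big_split; apply: eq_bigr => i _; rewrite mxE rmorphD mulrDl. Qed.

Lemma dotDr u v w : dot u (v + w) = dot u v + dot u w.
Proof. by rewrite -big_split; apply: eq_bigr => i _; rewrite mxE mulrDr. Qed.

Lemma dotZl k u v : dot (k *: u) v = k^* * dot u v.
Proof. by rewrite mulr_sumr; apply: eq_bigr => i _; rewrite mxE rmorphM mulrA. Qed.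

Lemma dotZr k u v : dot u (k *: v) = k * dot u v.
Proof. by rewrite mulr_sumr; apply: eq_bigr => i _; rewrite mxE mulrCA. Qed.

Lemma dotNl u v : dot (- u) v = - dot u v.
Proof. by rewrite -scaleN1r dotZl rmorphN1 mulN1r. Qed.

Lemma dotNr u v : dot u (- v) = - dot u v.
Proof. by rewrite -scaleN1r dotZr mulN1r. Qed.

Lemma dot0r u : dot u 0 = 0.
Proof. by rewrite -(scale0r 0) dotZr mul0r. Qed.

Lemma dot_sumr u (I : finType) (F : I -> vec) :
  dot u (\sum_j F j) = \sum_j dot u (F j).
Proof.
rewrite /dot exchange_big; apply: eq_bigr => i _.
by rewrite summxE mulr_sumr.
Qed.

Lemma conj_dot u v : (dot u v)^* = dot v u.
Proof.
rewrite rmorph_sum; apply: eq_bigr => i _.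
by rewrite rmorphM /= conjCK mulrC.
Qed.

Lemma vnorm_ge0 v : 0 <= vnorm v.
Proof. exact: sqrtr_ge0. Qed.

Lemma dot_vnorm v : dot v v = (vnorm v ^+ 2)%:C.
Proof.
rewrite sqr_sqrtr; last by apply: sumr_ge0 => i _; rewrite addr_ge0 ?sqr_ge0.
rewrite rmorph_sum; apply: eq_bigr => i _; by rewrite mulJc_normc sqr_normc.
Qed.

Lemma vnorm_eq0 v : vnorm v = 0 -> v = 0.
Proof.
move=> /eqP; rewrite sqrtr_eq0 => v0; apply/matrixP => i j; rewrite ord1 mxE.
have entry_ge0 l : true -> 0 <= Re (v l 0) ^+ 2 + Im (v l 0) ^+ 2.
  by rewrite addr_ge0 ?sqr_ge0.
have /(psumr_eq0P entry_ge0) entry0 : \sum_l (Re (v l 0) ^+ 2 + Im (v l 0) ^+ 2) = 0.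
  by apply/eqP; rewrite eq_le v0 sumr_ge0.
by apply: eq0_normc; apply/eqP; rewrite -sqrf_eq0 sqr_normc entry0.
Qed.

Lemma vnormZ (k : R) v : vnorm (k%:C *: v) = `|k| * vnorm v.
Proof.
apply/eqP; rewrite -(eqrXn2 (_ : 0 < 2)%N) ?mulr_ge0 ?vnorm_ge0 //.
apply/eqP/complexI; rewrite -dot_vnorm dotZl dotZr dot_vnorm conj_real mulrA.
by rewrite -!rmorphM exprMn real_normK ?num_real // expr2.
Qed.

Lemma Re_dot_le (s : R) u v :
  2 * s * Re (dot v u) <= s ^+ 2 * vnorm v ^+ 2 + vnorm u ^+ 2.
Proof.
have := dot_vnorm (s%:C *: v - u).
rewrite !(dotDl, dotDr, dotZl, dotZr, dotNl, dotNr) -(conj_dot v u) conj_real !dot_vnorm.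
move=> /(congr1 Re); rewrite /= !raddfB /= !Re_realM !raddfB /= ReJ => E.
by have := sqr_ge0 (vnorm (s%:C *: v - u)); rewrite -E; lra.
Qed.

Lemma mul_rank1mx f v : f *m f ^t* *m v = dot f v *: f.
Proof. by rewrite -mulmxA [f ^t* *m v]mx11_scalar mul_mx_scalar dotE. Qed.

Lemma sharp_measZ k f :
  (k *: f) *m (k *: f) ^t* = (k * k^*) *: (f *m f ^t*).
Proof. by apply/matrixP => i j; rewrite !mxE !big_ord1 !mxE rmorphM /=; ring. Qed.

Lemma psd_dot M v : (v ^t* *m M *m v) 0 0 = dot v (M *m v).
Proof. by rewrite -mulmxA dotE. Qed.

End InnerProduct.

Section RankOneSum.
Variables (R : realType) (d : nat) (f g : 'cV[R[i]]_d).
Hypotheses (f1 : dot f f = 1) (g1 : dot g g = 1).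
Local Notation c := (dot f g).
Local Notation A := (f *m f ^t* + g *m g ^t*).

Lemma mul_rank1_summx v : A *m v = dot f v *: f + dot g v *: g.
Proof. by rewrite mulmxDl !mul_rank1mx. Qed.

Lemma vnorm_comb_le (a b : R[i]) :
  vnorm (a *: f + b *: g) ^+ 2 <= (1 + normc c) * (normc a ^+ 2 + normc b ^+ 2).
Proof.
have /(congr1 Re) : dot (a *: f + b *: g) (a *: f + b *: g) =
    a^* * a + b^* * b + ((a^* * b * c) + (a^* * b * c)^*).
  rewrite !(dotDl, dotDr, dotZl, dotZr) f1 g1 -(conj_dot f g) !rmorphM /= conjCK.
  ring.
rewrite dot_vnorm !raddfD /= !mulJc_normc /= ReJ => ->.
have := Re_le_normc (a^* * b * c); rewrite !normcM normcJ.
have := normc_ge0 a; have := normc_ge0 b; have := normc_ge0 c.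
have := sqr_ge0 (normc a - normc b); nra.
Qed.

Lemma vnorm_rank1_sum_le v : vnorm v = 1 -> vnorm (A *m v) <= 1 + normc c.
Proof.
move=> v1; set s := 1 + normc c.
have s0 : 0 <= s by rewrite addr_ge0 ?normc_ge0.
set S := normc (dot f v) ^+ 2 + normc (dot g v) ^+ 2.
have N_le : vnorm (A *m v) ^+ 2 <= s * S by rewrite mul_rank1_summx vnorm_comb_le.
have ReS : Re (dot v (A *m v)) = S.
  rewrite mul_rank1_summx dotDr !dotZr -(conj_dot f v) -(conj_dot g v).
  by rewrite ![_ * _^*]mulrC !mulJc_normc raddfD.
have := Re_dot_le s (A *m v) v; rewrite ReS v1 expr1n mulr1 => CS.
(* [N <= s S] and [2 s S <= s^2 + N] force [N <= s^2]. *)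
have := vnorm_ge0 (A *m v); move: (vnorm _) N_le CS => N; nra.
Qed.

Lemma phase_mul : c^* / (normc c)%:C * c = (normc c)%:C.
Proof.
have [c0|c0] := eqVneq c 0; first by rewrite c0 mulr0 /= expr0n addr0 sqrtr0.
rewrite mulrAC mulJc_normc expr2 rmorphM /= mulfK //.
by apply: contra c0 => /eqP/complexI/eq0_normc ->.
Qed.

Lemma phase_normc : c^* / (normc c)%:C * (normc c)%:C = c^*.
Proof.
have [c0|c0] := eqVneq c 0; first by rewrite c0 rmorph0 !mul0r.
by rewrite divfK //; apply: contra c0 => /eqP/complexI/eq0_normc ->.
Qed.

Lemma rank1_sum_eigenvector :
  exists2 w : 'cV_d, w != 0 & A *m w = (1 + normc c)%:C *: w.
Proof.
(* The phase [u] of [c^*] is [0] when [c = 0] (division by zero); then [w = f] is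
   still an eigenvector since [f] and [g] are orthogonal. *)
set u := c^* / (normc c)%:C; set w := f + u *: g.
have fw : dot f w = (1 + normc c)%:C.
  by rewrite dotDr dotZr f1 phase_mul rmorphD rmorph1.
exists w.
  apply/eqP => w0; move: fw; rewrite w0 dot0r => /(congr1 Re) /=.
  by have := normc_ge0 c; lra.
rewrite mul_rank1_summx fw dotDr dotZr g1 mulr1 -(conj_dot f g) -{1}phase_normc.
rewrite -/u scalerDr scalerA; congr (_ + _ *: _).
by rewrite rmorphD rmorph1; ring.
Qed.

Lemma opnorm_rank1_sum : opnorm A = 1 + normc c.
Proof.
have [w w0 Aw] := rank1_sum_eigenvector.
have nw0 : 0 < vnorm w.
  by rewrite lt_def vnorm_ge0 andbT; apply: contra w0 => /eqP/vnorm_eq0 ->.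
apply: sup_attained => [|_ [v /= v1 <-]]; last exact: vnorm_rank1_sum_le.
exists ((vnorm w)^-1%:C *: w).
  rewrite /= vnormZ ger0_norm ?invr_ge0 ?vnorm_ge0 //.
  by rewrite mulVf ?lt0r_neq0.
rewrite -scalemxAr Aw scalerA mulrC -scalerA !vnormZ.
by rewrite !ger0_norm ?addr_ge0 ?normc_ge0 ?invr_ge0 ?vnorm_ge0 // mulVf ?lt0r_neq0 ?mulr1.
Qed.

End RankOneSum.

Section OrthonormalBasis.
Variables (R : realType) (d : nat) (phi : 'I_d -> 'cV[R[i]]_d).
Hypothesis hphi : orthonormal_basis phi.

Lemma onb_dot x y : dot (phi x) (phi y) = (x == y)%:R.
Proof.
by have /(congr1 (fun M : 'M_1 => M 0 0)) := hphi x y; rewrite dotE mxE eqxx mulr1n.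
Qed.

Lemma onb_dot_self x : dot (phi x) (phi x) = 1.
Proof. by rewrite onb_dot eqxx. Qed.

Lemma sum_sharp_meas : \sum_x sharp_meas phi x = 1%:M.
Proof.
pose U : 'M[R[i]]_d := \matrix_(i, j) phi j i 0.
have /mulmx1C UU : U ^t* *m U = 1%:M.
  apply/matrixP => x y; rewrite !mxE -onb_dot.
  by apply: eq_bigr => i _; rewrite !mxE.
rewrite -UU; apply/matrixP => i j; rewrite summxE !mxE.
by apply: eq_bigr => x _; rewrite !mxE big_ord1 !mxE.
Qed.

Lemma onb_expand v : v = \sum_x dot (phi x) v *: phi x.
Proof.
rewrite -{1}[v]mul1mx -sum_sharp_meas mulmx_suml.
by apply: eq_bigr => x _; rewrite mul_rank1mx.
Qed.

Lemma parseval v : \sum_x normc (dot (phi x) v) ^+ 2 = vnorm v ^+ 2.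
Proof.
apply: complexI; rewrite -dot_vnorm [X in dot v X](onb_expand v) dot_sumr rmorph_sum.
by apply: eq_bigr => x _; rewrite dotZr -(conj_dot (phi x) v) mulrC mulJc_normc.
Qed.

Lemma sqr_vnorm_onb x : vnorm (phi x) ^+ 2 = 1.
Proof. by apply: complexI; rewrite -dot_vnorm onb_dot_self. Qed.

Lemma sharp_meas_orth x y : x != y -> sharp_meas phi x *m phi y = 0.
Proof. by move=> /negbTE xy; rewrite mul_rank1mx onb_dot xy scale0r. Qed.

End OrthonormalBasis.

Section PositiveSemidefinite.
Variables (R : realType) (d : nat).
Implicit Types (M : 'M[R[i]]_d) (u f : 'cV[R[i]]_d).

Lemma psd_rank1 f : psdmx (f *m f ^t*).
Proof.
move=> v; rewrite psd_dot mul_rank1mx dotZr -(conj_dot f v) mulrC mulJc_normc.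
by rewrite lecR sqr_ge0.
Qed.

Lemma psd_kernel M u : psdmx M -> dot u (M *m u) = 0 -> M *m u = 0.
Proof.
(* Positivity of the form along [t u + M u], for real and imaginary [t], kills the
   cross term [<M u, M u>]. *)
move=> psdM uMu; set w := M *m u.
set p := dot u (M *m w); set q := dot w w; set r := dot w (M *m w).
have pos t : 0 <= t^* * p + t * q + r.
  have := psdM (t *: u + w); rewrite psd_dot mulmxDr -scalemxAr.
  by rewrite !(dotDl, dotDr, dotZl, dotZr) uMu !mulr0 add0r -/w addrA.
have pq : p + q = 0.
  apply: (affine_ge0_slope0 (r := r)) => s.
  by have := pos s%:C; rewrite conj_real -mulrDr.
have qp : 'i * (q - p) = 0.
  apply: (affine_ge0_slope0 (r := r)) => s; have := pos (s%:C * 'i).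
  have -> : (s%:C * 'i)^* = - (s%:C * 'i) by apply: complex_ext => /=; ring.
  by have -> : s%:C * ('i * (q - p)) = - (s%:C * 'i) * p + s%:C * 'i * q by ring.
have q0 : q = 0.
  move: qp => /eqP; rewrite mulf_eq0 (negbTE (neq0Ci _)) /= subr_eq0 => /eqP pq'.
  by move: pq; rewrite pq' -mulr2n => /eqP; rewrite mulrn_eq0 => /eqP.
apply: vnorm_eq0; apply/eqP; rewrite -sqrf_eq0; apply/eqP/(@complexI R).
by rewrite -dot_vnorm -/q q0.
Qed.


Lemma psd_sum_kernel (I : finType) (G : I -> 'M[R[i]]_d) M u :
  (forall j, psdmx (G j)) -> \sum_j G j = M -> M *m u = 0 -> forall j, G j *m u = 0.
Proof.
move=> psdG sumG Mu j; apply: psd_kernel => //.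
have Gu_ge0 k : true -> 0 <= dot u (G k *m u).
  by rewrite -psd_dot => _; apply: psdG.
apply: (psumr_eq0P Gu_ge0) => //.
by rewrite -dot_sumr -mulmx_suml sumG Mu dot0r.
Qed.

End PositiveSemidefinite.

Lemma compatible_perm (R : realType) (d : nat) (M N : 'I_d -> 'M[R[i]]_d)
    (sigma : {perm 'I_d}) :
  (forall x, psdmx (M x)) -> \sum_x M x = 1%:M -> (forall y, N y = M (sigma y)) ->
  compatible M N.
Proof.
move=> psdM sumM NM; pose G x y := if x == sigma y then M x else 0.
have row x : \sum_y G x y = M x.
  rewrite (bigD1 (sigma^-1 x)%g) //= /G permKV eqxx big1 ?addr0 // => y.
  by case: (x =P sigma y) => // ->; rewrite permK eqxx.
exists G; split; [|split; [|split]] => //.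
- move=> x y v; rewrite /G; case: eqP => _; first exact: psdM.
  by rewrite mulmx0 mul0mx mxE.
- by under eq_bigr do rewrite row.
- move=> y; rewrite (bigD1 (sigma y)) //= /G eqxx big1 ?addr0 ?NM // => x.
  by move=> /negbTE ->.
Qed.

Section Overlaps.
Variables (R : realType) (d : nat) (phi psi : 'I_d -> 'cV[R[i]]_d).
Hypotheses (hphi : orthonormal_basis phi) (hpsi : orthonormal_basis psi).
Local Notation M1 := (sharp_meas phi).
Local Notation M2 := (sharp_meas psi).
Local Notation t x y := (normc (dot (phi x) (psi y))).

Lemma sum_overlap_col y : \sum_x t x y ^+ 2 = 1.
Proof. by rewrite (parseval hphi) (sqr_vnorm_onb hpsi). Qed.

Lemma sum_overlap_row x : \sum_y t x y ^+ 2 = 1.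
Proof.
rewrite -(sqr_vnorm_onb hphi x) -(parseval hpsi); apply: eq_bigr => y _.
by rewrite -conj_dot normcJ.
Qed.

Lemma overlap_le1 x y : t x y <= 1.
Proof.
have t0 := normc_ge0 (dot (phi x) (psi y)).
suff : t x y ^+ 2 <= 1 by move=> ?; nra.
rewrite -(sum_overlap_col y) (bigD1 x) //= lerDl.
by apply: sumr_ge0 => i _; apply: sqr_ge0.
Qed.

Lemma Pqrac_sharp :
  Pqrac M1 M2 = (2 * d ^ 2)%:R^-1 * (d%:R ^+ 2 + \sum_x \sum_y t x y).
Proof.
rewrite /Pqrac; congr (_ * _).
under eq_bigr do under eq_bigr do
  rewrite /sharp_meas opnorm_rank1_sum ?onb_dot_self //.
under eq_bigr do rewrite big_split sumr_const card_ord.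
by rewrite big_split sumr_const card_ord /= expr2 mulr_natr.
Qed.

Lemma sum_overlap_leif :
  d%:R <= \sum_x \sum_y t x y
    ?= iff [forall x, [forall y, (t x y == 0) || (t x y == 1)]].
Proof.
have -> : d%:R = \sum_x \sum_y t x y ^+ 2 :> R.
  by under eq_bigr do rewrite sum_overlap_row; rewrite sumr_const card_ord.
apply: leif_sum => x _; apply: leif_sum => y _.
by apply: sqr_le_self_leif; rewrite normc_ge0 overlap_le1.
Qed.

Lemma overlaps01_perm :
  [forall x, [forall y, (t x y == 0) || (t x y == 1)]] ->
  exists sigma : {perm 'I_d}, forall y, M2 y = M1 (sigma y).
Proof.
move=> /forallP t01.
have ex y : exists x, t x y == 1.
  apply/existsP; apply: contraT; rewrite negb_exists => /forallP t_neq1.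
  have := sum_overlap_col y; rewrite big1 => [/eqP|x _].
    by rewrite eq_sym oner_eq0.
  have /forallP/(_ y) := t01 x; rewrite (negbTE (t_neq1 x)) orbF.
  by move=> /eqP ->; rewrite expr0n.
pose s y := xchoose (ex y).
have s1 y : t (s y) y = 1 by apply/eqP; exact: (xchooseP (ex y)).
have s_inj : injective s.
  move=> y1 y2 s12; apply/eqP; rewrite eq_sym; apply: contraT => y21.
  have := s1 y2; rewrite -s12 (sum_sqr_one_eq0 (sum_overlap_row (s y1)) (s1 y1) y21).
  by move=> /eqP; rewrite eq_sym oner_eq0.
have psiE y : psi y = dot (phi (s y)) (psi y) *: phi (s y).
  rewrite {1}(onb_expand hphi (psi y)) (bigD1 (s y)) //= big1 ?addr0 // => x xs.
  by rewrite (eq0_normc (sum_sqr_one_eq0 (sum_overlap_col y) (s1 y) xs)) scale0r.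
exists (perm s_inj) => y; rewrite permE /sharp_meas psiE sharp_measZ.
by rewrite mulrC mulJc_normc s1 expr1n scale1r.
Qed.

Lemma compatible_overlaps01 :
  compatible M1 M2 -> [forall x, [forall y, (t x y == 0) || (t x y == 1)]].
Proof.
move=> [G [psdG [_ [rowG colG]]]]; apply/forallP => x; apply/forallP => y.
have kill_phi x1 y1 x2 : x2 != x1 -> G x1 y1 *m phi x2 = 0.
  move=> x21; apply: (psd_sum_kernel (psdG x1) (rowG x1)).
  by rewrite sharp_meas_orth // eq_sym.
have kill_psi x1 y1 y2 : y2 != y1 -> G x1 y1 *m psi y2 = 0.
  move=> y21; apply: (psd_sum_kernel (fun x => psdG x y1) (colG y1) _ x1).
  by rewrite sharp_meas_orth // eq_sym.
set c := dot (phi x) (psi y).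
have Gphi : G x y *m phi x = c^* *: (G x y *m psi y).
  rewrite {1}(onb_expand hpsi (phi x)) mulmx_sumr (bigD1 y) //= big1 ?addr0.
    by rewrite -scalemxAr -conj_dot.
  by move=> y' y'y; rewrite -scalemxAr kill_psi // scaler0.
have Gpsi : G x y *m psi y = c *: (G x y *m phi x).
  rewrite {1}(onb_expand hphi (psi y)) mulmx_sumr (bigD1 x) //= big1 ?addr0.
    by rewrite -scalemxAr.
  by move=> x' x'x; rewrite -scalemxAr kill_phi // scaler0.
have phiGphi : dot (phi x) (G x y *m phi x) = (t x y ^+ 2)%:C.
  have := congr1 (fun M => dot (phi x) (M *m phi x)) (colG y).
  rewrite /= mulmx_suml dot_sumr (bigD1 x) //= big1 => [|x' x'x]; last first.
    by rewrite kill_phi ?dot0r // eq_sym.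
  by rewrite addr0 => ->; rewrite mul_rank1mx dotZr -(conj_dot (phi x)) mulJc_normc.
have : (t x y ^+ 2)%:C = (t x y ^+ 2)%:C * (t x y ^+ 2)%:C.
  by rewrite -{1}phiGphi Gphi Gpsi scalerA mulJc_normc dotZr phiGphi.
rewrite -rmorphM => /complexI/eqP; rewrite -subr_eq0 -{1}[t x y ^+ 2]mulr1 -mulrBr.
rewrite mulf_eq0 subr_eq0 expf_eq0 /= [1 == _]eq_sym sqrf_eq1.
move=> /orP[->//|/orP[->|/eqP t_neg]]; first by rewrite orbT.
by have := normc_ge0 c; rewrite -/c t_neg; lra.
Qed.

End Overlaps.

Theorem proposition1 (R : realType) (d : nat) (hd : (2 <= d)%N)
    (phi psi : 'I_d -> 'cV[R[i]]_d)
    (hphi : orthonormal_basis phi) (hpsi : orthonormal_basis psi) :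
  let M1 := sharp_meas phi in
  let M2 := sharp_meas psi in
  2^-1 * (1 + d%:R^-1) <= Pqrac M1 M2 /\
  (Pqrac M1 M2 = 2^-1 * (1 + d%:R^-1) <-> compatible M1 M2) /\
  (compatible M1 M2 <-> exists sigma : {perm 'I_d}, forall y, M2 y = M1 (sigma y)).
Proof.
move=> M1 M2.
have d_gt0 : (0 < d)%N by apply: leq_trans hd.
have classical_bound :
    2^-1 * (1 + d%:R^-1) = (2 * d ^ 2)%:R^-1 * (d%:R ^+ 2 + d%:R) :> R.
  by rewrite natrM natrX; field; rewrite pnatr_eq0 -lt0n.
have scale_gt0 : 0 < (2 * d ^ 2)%:R^-1 :> R.
  by rewrite invr_gt0 ltr0n muln_gt0 expn_gt0 d_gt0.
have [le_sum eq_sum] := sum_overlap_leif hphi hpsi.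
have compat_perm :
    compatible M1 M2 <-> exists sigma : {perm 'I_d}, forall y, M2 y = M1 (sigma y).
  split=> [/(compatible_overlaps01 hphi hpsi)/(overlaps01_perm hphi hpsi)//|[sigma]].
  by apply: compatible_perm (sum_sharp_meas hphi) => x; apply: psd_rank1.
rewrite (Pqrac_sharp hphi hpsi) classical_bound ler_pM2l // lerD2l le_sum.
split=> //; split=> //; split.
- move=> /(mulfI (lt0r_neq0 scale_gt0))/addrI/esym/eqP.
  by rewrite eq_sum => /(overlaps01_perm hphi hpsi)/compat_perm.
- by move=> /(compatible_overlaps01 hphi hpsi); rewrite -eq_sum => /eqP <-.
Qed.
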